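(* Let $\mathbf u$ be an infinite word over a finite alphabet whose language is closed under reversal. The following are equivalent: (1) the defect $D(\mathbf u)$ is finite; (2) there exists an integer $H$ such that for every prefix $w$ of $\mathbf u$ with $|w|\ge H$, the longest palindromic suffix of $w$ occurs in $w$ exactly once.
   Context: For a finite word $w=w_0\cdots w_{n-1}$ its reversal is $\overline{w}=w_{n-1}\cdots w_0$; $w$ is a palindrome if $w=\overline{w}$ (the empty word is a palindrome). The language of $\mathbf u$ is closed under reversal if every factor's reversal is also a factor. The defect of a finite word $w$ is $D(w)=|w|+1-(\text{number of distinct palindromic factors of } w, \text{ including the empty word})$. The defect of an infinite word is $D(\mathbf u)=\sup\{D(w): w \text{ a prefix of } \mathbf u\}$ (possibly $+\infty$). *)

From mathcomp Require Import all_boot all_order all_algebra.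
Set Implicit Arguments. Unset Strict Implicit. Unset Printing Implicit Defensive.

Definition prefix_of {A : Type} (u : nat -> A) (n : nat) : seq A := mkseq u n.

Definition factor_of {A : Type} (u : nat -> A) (w : seq A) : Prop :=
  exists i : nat, w = mkseq (fun k => u (i + k)) (size w).

Definition closed_under_reversal {A : Type} (u : nat -> A) : Prop :=
  forall w : seq A, factor_of u w -> factor_of u (rev w).

Definition palindrome {A : eqType} (w : seq A) : bool := rev w == w.

Definition factors {A : eqType} (w : seq A) : seq (seq A) :=
  [seq take j (drop i w) | i <- iota 0 (size w).+1, j <- iota 0 (size w).+1].

(* Number of distinct palindromic factors of w, including the empty word. *)
Definition num_pal {A : eqType} (w : seq A) : nat :=
  size (undup (filter palindrome (factors w))).

Definition defect {A : eqType} (w : seq A) : int :=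
  (((size w).+1)%:Z - (num_pal w)%:Z)%R.

Definition finite_defect {A : eqType} (u : nat -> A) : Prop :=
  exists K : int, forall n : nat, (defect (prefix_of u n) <= K)%R.

(* Longest palindromic suffix: drop the least i such that drop i w is a
   palindrome (exists since drop (size w) w = [::] is a palindrome). *)
Definition lps {A : eqType} (w : seq A) : seq A :=
  drop (find (fun i => palindrome (drop i w)) (iota 0 (size w).+1)) w.

Definition occurrences {A : eqType} (v w : seq A) : nat :=
  count (fun i => take (size v) (drop i w) == v) (iota 0 (size w - size v).+1).

(* Appending a letter to a word w creates at most one new palindromic factor,
   the longest palindromic suffix L of the extended word: any shorter
   palindromic suffix is a suffix, hence also a prefix, of the palindrome L and
   so already occurs in w.  L itself is new exactly when it is unioccurrent.
   Hence the defect of the prefix of length n counts the i < n for which the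
   longest palindromic suffix of the prefix of length i + 1 is not
   unioccurrent; it is bounded iff there are finitely many such i. *)

From mathcomp Require Import all_boot all_order all_algebra zify.
From Stdlib Require Import Classical.
Set Implicit Arguments. Unset Strict Implicit. Unset Printing Implicit Defensive.

Section Palindromes.
Variable A : eqType.
Implicit Types (s v w L : seq A) (a : A).

Lemma mem_factors v w : (v \in factors w) = infix v w.
Proof.
apply/idP/idP.
  case/allpairsP=> [[i j] [_ _ /= ->]].
  exact: infix_trans (infix_take _ _) (infix_drop _ _).
case/infixP=> p [q ->]; apply/allpairsP; exists (size p, size v); split=> /=.
- by rewrite in_cons mem_iota !size_cat; lia.
- by rewrite in_cons mem_iota !size_cat; lia.
by rewrite drop_size_cat // take_size_cat.
Qed.

Definition lps_index s := find (fun i => palindrome (drop i s)) (iota 0 (size s).+1).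

Lemma lpsE s : lps s = drop (lps_index s) s.
Proof. by []. Qed.

Lemma has_palindrome_drop s : has (fun i => palindrome (drop i s)) (iota 0 (size s).+1).
Proof.
by apply/hasP; exists (size s); rewrite ?mem_iota ?drop_size //; lia.
Qed.

Lemma lps_index_leq s : lps_index s <= size s.
Proof. by have := has_palindrome_drop s; rewrite has_find size_iota. Qed.

Lemma palindrome_lps s : palindrome (lps s).
Proof.
have := nth_find 0 (has_palindrome_drop s).
by rewrite nth_iota ?add0n // ltnS lps_index_leq.
Qed.

Lemma lps_index_min s i : palindrome (drop i s) -> lps_index s <= i.
Proof.
move=> pal_i; rewrite leqNgt; apply/negP => lt_i.
have := before_find 0 lt_i; rewrite nth_iota ?add0n ?pal_i //.
by have := lps_index_leq s; lia.
Qed.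

Lemma palindrome_suffix_prefix v L :
  palindrome v -> palindrome L -> suffix v L -> prefix v L.
Proof. by move=> /eqP pal_v /eqP pal_L; rewrite -prefix_rev pal_v pal_L. Qed.

Lemma prefix_suffix_rcons_infix v L w a :
  prefix v L -> size v < size L -> suffix L (rcons w a) -> infix v w.
Proof.
case/prefixP=> q ->; rewrite size_cat -{1}[size v]addn0 ltn_add2l.
case/lastP: q => // q b _; rewrite -rcons_cat.
by case/suffixP=> p; rewrite -rcons_cat => /rcons_inj [-> _]; apply: infix_infix.
Qed.

Lemma infix_rcons_palindrome w a v : palindrome v ->
  infix v (rcons w a) = (v == lps (rcons w a)) || infix v w.
Proof.
move=> pal_v; set s := rcons w a.
apply/idP/idP; last first.
  case/orP=> [/eqP->|]; first exact/suffixW/suffix_drop.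
  by move/infix_trans; apply; apply: infix_rcons.
rewrite infix_rconsl; case/orP=> [|->]; last by rewrite orbT.
rewrite suffixE => /eqP def_v; set i := size s - size v in def_v.
have := @lps_index_min s i; rewrite def_v => /(_ pal_v).
rewrite leq_eqVlt => /orP[/eqP eq_i|lt_i]; first by rewrite lpsE eq_i def_v eqxx.
have v_sufL : suffix v (lps s).
  by rewrite lpsE -def_v -(subnKC (ltnW lt_i)) addnC -drop_drop suffix_drop.
apply/orP; right; apply: (@prefix_suffix_rcons_infix _ (lps s) _ a).
- exact: palindrome_suffix_prefix (palindrome_lps s) v_sufL.
- by rewrite lpsE -def_v !size_drop -/s /i; have := lps_index_leq s; lia.
- exact: suffix_drop.
Qed.

Lemma mem_palindromic_factors_rcons w a :
  filter palindrome (factors (rcons w a)) =i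
  lps (rcons w a) :: filter palindrome (factors w).
Proof.
move=> v; rewrite in_cons !mem_filter !mem_factors.
have [pal_v|npal_v] /= := boolP (palindrome v); first exact: infix_rcons_palindrome.
by rewrite orbF; apply/esym/eqP => def_v; rewrite def_v palindrome_lps in npal_v.
Qed.

Lemma num_pal_rcons w a :
  num_pal (rcons w a) = num_pal w + ~~ infix (lps (rcons w a)) w.
Proof.
have eq_undup : undup (filter palindrome (factors (rcons w a))) =i
    undup (lps (rcons w a) :: filter palindrome (factors w)).
  by move=> v; rewrite !mem_undup mem_palindromic_factors_rcons.
rewrite /num_pal (perm_size (uniq_perm (undup_uniq _) (undup_uniq _) eq_undup)).
set pals := filter palindrome (factors w).
rewrite /= /pals mem_filter palindrome_lps mem_factors.
by case: (infix _ w); rewrite ?addn0 ?addn1.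
Qed.

Lemma occurrences_gt0 v w : (0 < occurrences v w) = infix v w.
Proof.
rewrite /occurrences -has_count; apply/hasP/idP => [[i _ /eqP <-]|].
  exact: infix_trans (infix_take _ _) (infix_drop _ _).
case/infixP=> p [q ->]; exists (size p); last by rewrite drop_size_cat // take_size_cat.
by rewrite mem_iota !size_cat; lia.
Qed.

Lemma occurrences_rcons_suffix v w a : suffix v (rcons w a) ->
  occurrences v (rcons w a) = (occurrences v w).+1.
Proof.
rewrite suffixE /occurrences size_rcons => /eqP def_v.
rewrite -[(_.+1 - _).+1]addn1 iotaD count_cat [count _ (iota _ 1)]/= add0n.
rewrite def_v take_size eqxx addn0 addn1; congr _.+1.
have [le_vw|lt_wv] := leqP (size v) (size w); last first.
  have -> : (size w).+1 - size v = 0 by lia.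
  have -> : size w - size v = 0 by lia.
  rewrite /= drop0 take_oversize; last lia.
  by case: eqP lt_wv => // ->; rewrite ltnn.
rewrite (subSn le_vw); apply: eq_in_count => i; rewrite mem_iota => /andP[_ lt_i].
rewrite drop_rcons; last lia.
by rewrite -cats1 takel_cat // size_drop; lia.
Qed.

Lemma occurrences_lps_rcons w a :
  (occurrences (lps (rcons w a)) (rcons w a) == 1) = ~~ infix (lps (rcons w a)) w.
Proof.
by rewrite occurrences_rcons_suffix ?suffix_drop // eqSS -occurrences_gt0 -eqn0Ngt.
Qed.
End Palindromes.

Section CountIota.
Variable b : pred nat.

Lemma count_iota0D m n :
  count b (iota 0 (m + n)) = count b (iota 0 m) + count (fun i => b (m + i)) (iota 0 n).
Proof. by rewrite iotaD count_cat add0n -[m]addn0 iotaDl count_map addn0. Qed.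

Lemma count_iota0S n : count b (iota 0 n.+1) = count b (iota 0 n) + b n.
Proof. by rewrite -addn1 count_iota0D /= !addn0. Qed.

Lemma count_iota0_bound_eventually_false H :
  (forall n, H <= n -> ~~ b n) -> forall n, count b (iota 0 n) <= count b (iota 0 H).
Proof.
move=> late_false n; have [le_nH|lt_Hn] := leqP n H.
  by rewrite -(subnKC le_nH) count_iota0D leq_addr.
rewrite -(subnKC (ltnW lt_Hn)) count_iota0D.
rewrite (@eq_count _ (fun i => b (H + i)) pred0) ?count_pred0 ?addn0 //.
by move=> i; apply/negbTE/late_false/leq_addr.
Qed.
End CountIota.

Lemma bounded_count_iota0_eventually_false c (b : pred nat) :
  (forall n, count b (iota 0 n) <= c) -> exists H, forall n, H <= n -> ~~ b n.
Proof.
elim: c b => [|c IHc] b bounded.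
  by exists 0 => n _; have := bounded n.+1; rewrite count_iota0S; case: (b n); lia.
have [[m bm]|never] := classic (exists m, b m); last first.
  by exists 0 => n _; apply/negP => bn; apply: never; exists n.
have [H lateH] : exists H, forall n, H <= n -> ~~ b (m.+1 + n).
  apply: (IHc (fun i => b (m.+1 + i))) => n.
  by have := bounded (m.+1 + n); rewrite count_iota0D count_iota0S bm; lia.
exists (m.+1 + H) => n le_n; rewrite -(subnKC (leq_trans (leq_addr H m.+1) le_n)).
by apply: lateH; lia.
Qed.

Section InfiniteWord.
Variables (A : eqType) (u : nat -> A).

Lemma prefix_ofS n : prefix_of u n.+1 = rcons (prefix_of u n) (u n).
Proof. exact: mkseqS. Qed.

Definition lps_repeated n : bool := infix (lps (prefix_of u n.+1)) (prefix_of u n).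

Lemma occurrences_lps_prefix_ofS n :
  (occurrences (lps (prefix_of u n.+1)) (prefix_of u n.+1) == 1) = ~~ lps_repeated n.
Proof. by rewrite /lps_repeated prefix_ofS occurrences_lps_rcons. Qed.

Lemma num_pal_prefix_of n :
  num_pal (prefix_of u n) + count lps_repeated (iota 0 n) = n.+1.
Proof.
elim: n => [|n IHn] //.
rewrite count_iota0S {1}prefix_ofS num_pal_rcons -prefix_ofS -/(lps_repeated n).
by case: (lps_repeated n) IHn => /=; lia.
Qed.

Lemma defect_prefix_of n : defect (prefix_of u n) = Posz (count lps_repeated (iota 0 n)).
Proof. by have := num_pal_prefix_of n; rewrite /defect size_mkseq; lia. Qed.
End InfiniteWord.

Theorem corollary3 (A : finType) (u : nat -> A) :
  closed_under_reversal u ->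
  (finite_defect u <->
   exists H : nat, forall n : nat, H <= n ->
     occurrences (lps (prefix_of u n)) (prefix_of u n) = 1).
Proof.
move=> _; split.
  case=> K bounded.
  have [H lateH] : exists H, forall n, H <= n -> ~~ lps_repeated u n.
    apply: (@bounded_count_iota0_eventually_false `|K|%N) => n.
    by have := bounded n; rewrite defect_prefix_of; lia.
  exists H.+1 => -[|n] // le_Hn; apply/eqP.
  by rewrite occurrences_lps_prefix_ofS lateH.
case=> H unioccurrent; exists (Posz (count (lps_repeated u) (iota 0 H))) => n.
rewrite defect_prefix_of lez_nat; apply: count_iota0_bound_eventually_false => m le_Hm.
by rewrite -occurrences_lps_prefix_ofS unioccurrent // ltnW.
Qed.
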